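(* Let $r\in\{1,\infty\}$, $N\in\{0,2,3,\ldots\}$, and let $p$ be the value of $\mathbb{G}_r(N)$. Let $K$ be a closed subgroup of $\mathbb{G}_r(N)$ which is bounded (in the metric $(x,y)\mapsto p(x-y)$) and such that for every finite group $H$ and every value $q$ on $K\times H$ with $(K\times H,+,q)\in\mathfrak{G}_r(N)$ and $q(x,0)=p(x)$ for $x\in K$, there is an isometric group homomorphism $\psi\colon K\times H\to\mathbb{G}_r(N)$ with $\psi(x,0)=x$ for all $x\in K$. Then $K$ is compact.
   Context: All groups are Abelian. A value on $G$ is $p\colon G\to[0,\infty)$ with $p(x)=0\iff x=0$, $p(-x)=p(x)$, $p(x+y)\leqslant p(x)+p(y)$. Class $\mathcal{O}_0$: $\lim_n p(na)/n=0$ for all $a$. $\mathfrak{G}_r(N)$: separable valued Abelian groups of class $\mathcal{O}_0$ with $p\leqslant r$ (vacuous if $r=\infty$) and of exponent $N$ if $N\neq0$. $\mathbb{G}_r(N)$ is the valued Abelian group, unique up to isometric group isomorphism, which (G1) is complete and in $\mathfrak{G}_r(N)$; (G2) for every finite valued Abelian group $(H,+,q)$ (of exponent $N$ if $N\neq0$) with $q\leqslant r$, subgroup $K$, isometric homomorphism $\varphi\colon K\to\mathbb{G}_r(N)$ and $\varepsilon\in(0,1)$, there is a homomorphism $\varphi_\varepsilon\colon H\to\mathbb{G}_r(N)$ with $p(\varphi(x)-\varphi_\varepsilon(x))\leqslant\varepsilon$ on $K$ and $(1-\varepsilon)q\leqslant p\circ\varphi_\varepsilon\leqslant(1+\varepsilon)q$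 on $H$; (G3) if $N=0$, finite-order elements are dense. *)

From HB Require Import structures.
From mathcomp Require Import all_boot all_order all_algebra.
From mathcomp Require Import reals.
From Stdlib Require List.
Set Implicit Arguments. Unset Strict Implicit. Unset Printing Implicit Defensive.
Import Order.TTheory GRing.Theory Num.Theory.
Local Open Scope ring_scope.

Inductive radius := r_one | r_infty.

Section Valued.
Variable R : realType.

(* Everything is stated for a subgroup S of an ambient abelian group T,
   carrying a function v : T -> R (only its values on S matter). *)
Variables (T : zmodType).

Definition is_subgroup (S : T -> Prop) :=
  S 0 /\ (forall x y, S x -> S y -> S (x - y)).

Definition is_value (S : T -> Prop) (v : T -> R) :=
  [/\ (forall x, S x -> 0 <= v x),
      (forall x, S x -> (v x = 0 <-> x = 0)),
      (forall x, S x -> v (- x) = v x) &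
      (forall x y, S x -> S y -> v (x + y) <= v x + v y)].

Definition class_O0 (S : T -> Prop) (v : T -> R) :=
  forall a, S a -> forall eps : R, 0 < eps ->
    exists n0 : nat, forall n : nat, (n0 <= n)%N ->
      `| v (a *+ n) / n%:R - 0 | < eps.

Definition separable (S : T -> Prop) (v : T -> R) :=
  exists s : nat -> T, (forall n, S (s n)) /\
    (forall x, S x -> forall eps : R, 0 < eps -> exists n, v (x - s n) < eps).

Definition bounded_by (r : radius) (S : T -> Prop) (v : T -> R) :=
  match r with
  | r_one => forall x, S x -> v x <= 1
  | r_infty => True
  end.

Definition has_exponent (N : nat) (S : T -> Prop) :=
  N <> 0%N -> forall x, S x -> x *+ N = 0.

Definition in_frakG (r : radius) (N : nat) (S : T -> Prop) (v : T -> R) :=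
  [/\ is_subgroup S, is_value S v, separable S v, class_O0 S v &
      bounded_by r S v /\ has_exponent N S].

Definition complete (S : T -> Prop) (v : T -> R) :=
  forall s : nat -> T, (forall n, S (s n)) ->
    (forall eps : R, 0 < eps -> exists n0 : nat, forall m n : nat,
       (n0 <= m)%N -> (n0 <= n)%N -> v (s m - s n) < eps) ->
    exists l, S l /\ (forall eps : R, 0 < eps -> exists n0 : nat,
       forall n : nat, (n0 <= n)%N -> v (s n - l) < eps).

Definition open_set (v : T -> R) (U : T -> Prop) :=
  forall x, U x -> exists eps : R, 0 < eps /\ (forall y, v (y - x) < eps -> U y).

Definition closed_set (v : T -> R) (A : T -> Prop) :=
  open_set v (fun x => ~ A x).

Definition metric_bounded (v : T -> R) (A : T -> Prop) :=
  exists M : R, forall x y, A x -> A y -> v (x - y) <= M.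

Definition compact_set (v : T -> R) (A : T -> Prop) :=
  forall (I : Type) (U : I -> T -> Prop),
    (forall i, open_set v (U i)) ->
    (forall x, A x -> exists i, U i x) ->
    exists s : list I, forall x, A x -> exists i, List.In i s /\ U i x.

End Valued.

Definition full {T : Type} : T -> Prop := fun _ => True.

(* (G, +, p) is (an isometric copy of) G_r(N): properties (G1), (G2), (G3). *)
Definition is_universal_G (R : realType) (r : radius) (N : nat)
    (G : zmodType) (p : G -> R) :=
  [/\
   in_frakG r N full p /\ complete full p,
   (forall (H : finZmodType) (q : H -> R) (K : H -> Prop) (phi : H -> G)
      (eps : R),
      is_value full q -> bounded_by r full q -> has_exponent N (@full H) ->
      is_subgroup K ->
      (forall x y, K x -> K y -> phi (x + y) = phi x + phi y) ->
      (forall x, K x -> p (phi x) = q x) ->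
      0 < eps < 1 ->
      exists phie : H -> G,
        [/\ (forall x y, phie (x + y) = phie x + phie y),
            (forall x, K x -> p (phi x - phie x) <= eps) &
            (forall x, (1 - eps) * q x <= p (phie x) <= (1 + eps) * q x)]) &
   (N = 0%N -> forall x (eps : R), 0 < eps ->
      exists y, (exists n : nat, (0 < n)%N /\ y *+ n = 0) /\ p (x - y) < eps)].

(* Proof idea: the ambient group is complete and K is closed, so it suffices
   that K is totally bounded.  Otherwise K contains a sequence (x_i) that is
   beta-separated both from the other x_j and from the -x_j.  For a set S of
   indices let g_S be the supremum of the tents of height beta at +-x_i,
   i in S: it is even, 1-Lipschitz and at most beta.  Then
   q (x, a) := if a = 0 then p x else c + g_S x, with 2c bounding p on K, is
   a value on K x Z_N of class frak G_r(N) extending p, and realising it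
   isometrically in G_r(N) gives y_S with p (x + y_S) = c + g_S x on K.
   Evaluating at x_i shows that p (y_S - y_S') >= beta whenever S <> S': an
   uncountable separated family in a separable space, which Cantor's diagonal
   argument rules out. *)

From mathcomp Require Import all_boot all_order all_algebra.
From mathcomp Require Import reals boolp classical_sets.
From mathcomp Require Import lra.
Import Order.TTheory GRing.Theory Num.Theory.
Local Open Scope ring_scope.
Set Implicit Arguments. Unset Strict Implicit. Unset Printing Implicit Defensive.

Definition inv_natS (R : realType) (k : nat) : R := (k.+1%:R)^-1.

Lemma inv_natS_gt0 (R : realType) (k : nat) : 0 < inv_natS R k.
Proof. by rewrite invr_gt0 ltr0n. Qed.

Lemma exists_inv_natS_lt (R : realType) (t : R) : 0 < t ->
  exists k : nat, inv_natS R k < t.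
Proof.
move=> t0; exists (Num.Def.archi_bound t^-1).
rewrite /inv_natS invf_plt ?posrE ?ltr0n //.
apply: (lt_le_trans (archi_boundP _)); first by rewrite invr_ge0 ltW.
by rewrite ler_nat.
Qed.

Lemma inv_nat_le_inv_natS (R : realType) (k n : nat) : (k < n)%N ->
  (n%:R)^-1 <= inv_natS R k.
Proof. by move=> kn; rewrite lef_pV2 ?posrE ?ltr0n ?(leq_trans _ kn) // ler_nat. Qed.

Lemma pair_mulrn (G H : zmodType) (x : G) (a : H) n :
  (x, a) *+ n = (x *+ n, a *+ n).
Proof. by elim: n => [|n IHn] //; rewrite !mulrS IHn. Qed.

Lemma subgroupD (T : zmodType) (S : T -> Prop) x y :
  is_subgroup S -> S x -> S y -> S (x + y).
Proof.
case=> S0 SB Sx Sy; rewrite -[y]opprK -[- y]sub0r.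
by apply: (SB) => //; apply: (SB).
Qed.

Section Value.
Variables (R : realType) (G : zmodType) (p : G -> R).
Hypothesis hv : is_value full p.

Lemma value_ge0 x : 0 <= p x.
Proof. by case: hv => h _ _ _; apply: h. Qed.

Lemma value0 : p 0 = 0.
Proof. by case: hv => _ h _ _; apply/(h 0 I). Qed.

Lemma value_eq0 x : p x = 0 -> x = 0.
Proof. by case: hv => _ h _ _; apply: (h x I).1. Qed.

Lemma valueN x : p (- x) = p x.
Proof. by case: hv => _ _ h _; apply: h. Qed.

Lemma valueD x y : p (x + y) <= p x + p y.
Proof. by case: hv => _ _ _ h; apply: h. Qed.

Lemma value_subC x y : p (x - y) = p (y - x).
Proof. by rewrite -opprB valueN. Qed.

Lemma value_sub_trans x y z : p (x - z) <= p (x - y) + p (y - z).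
Proof. by have := valueD (x - y) (y - z); rewrite addrA subrK. Qed.

End Value.

Lemma class_O0_le (R : realType) (T : zmodType) (S : T -> Prop) (v w : T -> R)
    (C : R) :
  class_O0 S w -> (forall x n, S x -> 0 <= v (x *+ n) <= w (x *+ n) + C) ->
  class_O0 S v.
Proof.
move=> hw hvw a Sa eps eps0; have eps20 : 0 < eps / 2 by rewrite divr_gt0.
have [n0 hn0] := hw a Sa _ eps20.
have C1 : 0 < `|C| + 1 by rewrite ltr_wpDl.
have [k] := exists_inv_natS_lt (divr_gt0 eps20 C1); rewrite ltr_pdivlMr // => hk.
exists (maxn n0 k.+1) => n; rewrite geq_max => /andP[n0n kn].
have [v0 vle] := andP (hvw a n Sa).
have n_inv0 : 0 <= (n%:R : R)^-1 by rewrite invr_ge0 ler0n.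
have Cn : C / n%:R <= eps / 2.
  apply/ltW/(le_lt_trans _ hk)/(le_trans (ler_wpM2r n_inv0 (ler_norm C))).
  by rewrite mulrC ler_pM ?lerDl ?inv_nat_le_inv_natS.
have := hn0 n n0n; rewrite subr0 => /(le_lt_trans (ler_norm _)) wn.
rewrite subr0 ger0_norm ?divr_ge0 ?ler0n //.
have : v (a *+ n) / n%:R <= w (a *+ n) / n%:R + C / n%:R.
  by rewrite -mulrDl ler_wpM2r.
lra.
Qed.

Lemma separable_subset (R : realType) (G : zmodType) (p : G -> R) (S : G -> Prop) a :
  is_value full p -> S a -> separable full p -> separable S p.
Proof.
move=> hv Sa [s [_ hs]].
have /choice[near hnear] : forall nk : nat * nat, exists y, S y /\
    ((exists2 x, S x & p (x - s nk.1) < inv_natS R nk.2) ->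
     p (y - s nk.1) < inv_natS R nk.2).
  move=> [n k] /=.
  have [[x Sx hx]|nx] := pselect (exists2 x, S x & p (x - s n) < inv_natS R k).
    by exists x.
  by exists a; split => // hx; case: nx.
exists (fun m => if unpickle m is Some nk then near nk else a).
split=> [m|x Sx eps eps0]; first by case: unpickle => [nk|] //; apply: (hnear nk).1.
have [k hk] := exists_inv_natS_lt (divr_gt0 eps0 (ltr0n R 2)).
have [n hn] := hs x Logic.I (inv_natS R k) (inv_natS_gt0 R k).
exists (pickle (n, k)); rewrite pickleK /=.
have := (hnear (n, k)).2 (ex_intro2 _ _ x Sx hn) => /=.
have := value_sub_trans hv x (s n) (near (n, k)).
rewrite (value_subC hv (s n)); lra.
Qed.

Lemma has_exponent_prod (G H : zmodType) (N : nat) (S : G -> Prop) :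
  has_exponent N (@full G) -> has_exponent N (@full H) ->
  has_exponent N (fun z : G * H => S z.1).
Proof. by move=> hG hH N0 [x a] _; rewrite pair_mulrn hG ?hH. Qed.

Lemma Zp_has_exponent (N : nat) : N <> 1%N -> has_exponent N (@full 'Z_N).
Proof.
move=> N1 N0 x _; rewrite -mulr_natr pchar_Zp ?mulr0 //.
by case: N x N0 N1 => [|[|]].
Qed.

Section Compactness.
Variables (R : realType) (G : zmodType) (p : G -> R) (K : G -> Prop).
Hypotheses (hv : is_value full p) (hcomp : complete full p)
  (hcl : closed_set p K).

Definition totally_bounded :=
  forall eps : R, 0 < eps -> exists L : list G,
    forall x, K x -> exists l, List.In l L /\ p (x - l) < eps.

Lemma closed_set_limit (w : nat -> G) l : (forall n, K (w n)) ->
  (forall eps : R, 0 < eps ->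
     exists n0 : nat, forall n, (n0 <= n)%N -> p (w n - l) < eps) ->
  K l.
Proof.
move=> Kw wl; apply: contrapT => nKl.
have [eps [eps0 heps]] := hcl nKl.
have [n0 hn0] := wl eps eps0.
exact: heps (w n0) (hn0 n0 (leqnn _)) (Kw n0).
Qed.

Section Cover.
Variables (I : Type) (U : I -> G -> Prop).

Definition finitely_covered (A : G -> Prop) :=
  exists s : list I, forall x, K x -> A x -> exists i, List.In i s /\ U i x.

Lemma finitely_covered_balls (A : G -> Prop) (eps : R) (L : list G) :
  (forall l, List.In l L -> finitely_covered (fun x => A x /\ p (x - l) < eps)) ->
  finitely_covered (fun x => A x /\ exists l, List.In l L /\ p (x - l) < eps).
Proof.
elim: L => [|l L IHL] hL; first by exists nil => x _ [_ [l []]].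
have [s1 hs1] := hL l (or_introl erefl).
have [s2 hs2] := IHL (fun l' h => hL l' (or_intror h)).
exists (s1 ++ s2) => x Kx [Ax [l' [[<-|inL] hl]]].
  have [i [si Ui]] := hs1 x Kx (conj Ax hl).
  by exists i; split => //; apply: List.in_or_app; left.
have [i [si Ui]] := hs2 x Kx (conj Ax (ex_intro _ l' (conj inL hl))).
by exists i; split => //; apply: List.in_or_app; right.
Qed.

Lemma uncovered_ball (A : G -> Prop) (eps : R) :
  (exists L : list G, forall x, K x -> exists l, List.In l L /\ p (x - l) < eps) ->
  ~ finitely_covered A ->
  exists z, ~ finitely_covered (fun x => A x /\ p (x - z) < eps).
Proof.
move=> [L hL] nA; apply: contrapT => allcov; apply: nA.
have [s hs] : finitely_covered
    (fun x => A x /\ exists l, List.In l L /\ p (x - l) < eps).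
  apply: finitely_covered_balls => l _; apply: contrapT => nl.
  by apply: allcov; exists l.
by exists s => x Kx Ax; apply: hs => //; split => //; apply: hL.
Qed.

Lemma uncovered_point (A : G -> Prop) :
  ~ finitely_covered A -> exists x, K x /\ A x.
Proof.
move=> nA; apply: contrapT => nx; apply: nA.
by exists nil => x Kx Ax; case: nx; exists x.
Qed.

Lemma uncovered_nested_balls : totally_bounded ->
  ~ finitely_covered (fun=> True) ->
  exists z : nat -> G, forall m,
    ~ finitely_covered (fun x => forall k, (k < m)%N -> p (x - z k) < inv_natS R k).
Proof.
move=> htb nT.
have /choice[next hnext] : forall Am : (G -> Prop) * nat, exists z,
    ~ finitely_covered Am.1 ->
    ~ finitely_covered (fun x => Am.1 x /\ p (x - z) < inv_natS R Am.2).
  move=> [A m] /=.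
  have [/(uncovered_ball (htb _ (inv_natS_gt0 _ m)))[z hz]|cA] :=
    pselect (~ finitely_covered A); first by exists z.
  by exists 0.
pose fix ball_chain m : G -> Prop := if m is m'.+1 then
  fun x => ball_chain m' x /\ p (x - next (ball_chain m', m')) < inv_natS R m'
  else fun=> True.
exists (fun k => next (ball_chain k, k)) => m.
have -> : (fun x => forall k, (k < m)%N ->
    p (x - next (ball_chain k, k)) < inv_natS R k) = ball_chain m.
  apply: funext => x; apply: propext; elim: m => [|m IHm] /=; first by split.
  rewrite -IHm; split=> [hx|[hx hm] k].
    by split=> [k km|]; apply: hx => //; apply: ltnW.
  by rewrite ltnS leq_eqVlt => /predU1P[->|/hx].
by elim: m => [|m IHm] //=; apply: (hnext (_, _)).
Qed.

End Cover.

Lemma totally_bounded_compact : totally_bounded -> compact_set p K.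
Proof.
move=> htb I U hU hcov.
have [[s hs]|nT] := pselect (finitely_covered U (fun=> True)).
  by exists s => x Kx; apply: hs.
have [z hz] := uncovered_nested_balls htb nT.
have /choice[w hw] : forall m, exists x,
    K x /\ forall k, (k < m.+1)%N -> p (x - z k) < inv_natS R k.
  by move=> m; apply: uncovered_point (hz m.+1).
have cauchy : forall eps : R, 0 < eps -> exists n0 : nat, forall m n : nat,
    (n0 <= m)%N -> (n0 <= n)%N -> p (w m - w n) < eps.
  move=> eps eps0; have [k hk] := exists_inv_natS_lt (divr_gt0 eps0 (ltr0n R 2)).
  exists k => m n km kn.
  have := value_sub_trans hv (w m) (z k) (w n).
  rewrite (value_subC hv (z k)).
  have := (hw m).2 k km; have := (hw n).2 k kn; lra.
have [l [_ wl]] := hcomp (fun=> Logic.I) cauchy.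
have [i Ui] := hcov l (closed_set_limit (fun n => (hw n).1) wl).
have [d [d0 hd]] := hU i l Ui.
have d30 : 0 < d / 3 by rewrite divr_gt0 // ltr0n.
have [k hk] := exists_inv_natS_lt d30; have [n0 hn0] := wl _ d30.
pose m := maxn n0 k.
(* The k-th ball around [z k] lies within [d] of the limit [l], so in [U i]. *)
case: (hz k.+1); exists [:: i] => x Kx Ax; exists i; split; first by left.
apply: hd.
have := value_sub_trans hv x (z k) l; have := value_sub_trans hv (z k) (w m) l.
rewrite (value_subC hv _ (w m)).
have := (hw m).2 k (leq_maxr _ _); have := hn0 m (leq_maxl _ _).
have := Ax k (ltnSn k); lra.
Qed.

End Compactness.

Section Separation.
Variables (R : realType) (G : zmodType) (p : G -> R) (K : G -> Prop).
Hypothesis hv : is_value full p.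

Lemma not_totally_bounded_far : ~ totally_bounded p K ->
  exists2 eps : R, 0 < eps & forall L : list G,
    exists x, K x /\ forall l, List.In l L -> eps <= p (x - l).
Proof.
move=> ntb; apply: contrapT => nfar; apply: ntb => eps eps0.
apply: contrapT => ncov; apply: nfar; exists eps => // L.
apply: contrapT => nx; apply: ncov; exists L => x Kx.
apply: contrapT => nl; apply: nx; exists x; split => // l inL.
by rewrite leNgt; apply/negP => hl; apply: nl; exists l.
Qed.

Lemma far_separated_seq (eps : R) :
  (forall L : list G, exists x, K x /\ forall l, List.In l L -> eps <= p (x - l)) ->
  exists xs : nat -> G, (forall i, K (xs i)) /\
    forall i j, i <> j -> eps <= p (xs i - xs j) /\ eps <= p (xs i + xs j).
Proof.
move=> /choice[next hnext].
pose fix pts n : list G :=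
  if n is n'.+1 then next (pts n') :: - next (pts n') :: pts n' else nil.
have in_pts i j : (j < i)%N ->
    List.In (next (pts j)) (pts i) /\ List.In (- next (pts j)) (pts i).
  elim: i => [|i IHi] //; rewrite ltnS leq_eqVlt => /predU1P[->|/IHi[h1 h2]] /=.
    by split; [left | right; left].
  by split; right; right.
have sep_lt i j : (j < i)%N -> eps <= p (next (pts i) - next (pts j)) /\
    eps <= p (next (pts i) + next (pts j)).
  move=> /in_pts[h1 h2]; split; first exact: (hnext (pts i)).2.
  by rewrite -[next (pts j)]opprK; apply: (hnext (pts i)).2.
exists (fun n => next (pts n)); split => [i|i j ij]; first exact: (hnext (pts i)).1.
case: (ltngtP i j) => [/sep_lt|/sep_lt //|eqij]; last by case: ij.
by rewrite (value_subC hv (next (pts i))) (addrC (next (pts i))).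
Qed.

End Separation.

Section Bumps.
Variables (R : realType) (G : zmodType) (p : G -> R).
Hypothesis hv : is_value full p.
Variables (xs : nat -> G) (beta : R).
Hypotheses (beta_gt0 : 0 < beta)
  (xs_sep : forall i j, i <> j ->
     beta <= p (xs i - xs j) /\ beta <= p (xs i + xs j)).

Definition bump (i : nat) (x : G) : R :=
  Num.max 0 (beta - Num.min (p (x - xs i)) (p (x + xs i))).

Lemma bump_ge0 i x : 0 <= bump i x.
Proof. by rewrite le_max lexx. Qed.

Lemma bump_le i x : bump i x <= beta.
Proof.
rewrite ge_max (ltW beta_gt0) lerBlDr lerDl.
by rewrite le_min !(value_ge0 hv).
Qed.

Lemma bump_self i : bump i (xs i) = beta.
Proof.
apply/le_anti; rewrite bump_le le_max; apply/orP; right.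
by rewrite subrr (value0 hv) (min_idPl (value_ge0 hv _)) subr0.
Qed.

Lemma bump_other i j : i <> j -> bump j (xs i) = 0.
Proof.
move=> /xs_sep[h1 h2]; apply/le_anti; rewrite bump_ge0 andbT ge_max lexx /=.
by rewrite subr_le0 le_min h1 h2.
Qed.

Lemma bump_lipschitz i u v : bump i u <= bump i v + p (u - v).
Proof.
have tri y : p (v - y) <= p (u - y) + p (u - v).
  by rewrite [p (u - y) + _]addrC (value_subC hv u v) (value_sub_trans hv).
have dist_lip : Num.min (p (v - xs i)) (p (v + xs i)) <=
    Num.min (p (u - xs i)) (p (u + xs i)) + p (u - v).
  rewrite -lerBlDr le_min !lerBlDr !ge_min.
  have := tri (- xs i); rewrite !opprK => ->.
  by rewrite tri orbT.
have := bump_ge0 i v; have := value_ge0 hv (u - v).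
have : beta - Num.min (p (v - xs i)) (p (v + xs i)) <= bump i v.
  by rewrite le_max lexx orbT.
rewrite ge_max => ? ? ?; apply/andP; split; lra.
Qed.

Lemma bumpN i x : bump i (- x) = bump i x.
Proof.
rewrite /bump -opprD valueN //.
have -> : - x + xs i = - (x - xs i) by rewrite opprB addrC.
by rewrite valueN // minC.
Qed.

Definition bump_sup (S : nat -> Prop) (x : G) : R :=
  sup [set y | y = 0 \/ exists2 i, S i & y = bump i x].

Lemma has_sup_bumps S x :
  has_sup [set y | y = 0 \/ exists2 i, S i & y = bump i x].
Proof.
split; first by exists 0; left.
by exists beta => y [->|[i _ ->]]; [apply: ltW | apply: bump_le].
Qed.

Lemma bump_sup_ge S x i : S i -> bump i x <= bump_sup S x.
Proof.
by move=> Si; apply: (sup_upper_bound (has_sup_bumps S x)); right; exists i.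
Qed.

Lemma bump_sup_ge0 S x : 0 <= bump_sup S x.
Proof. by apply: (sup_upper_bound (has_sup_bumps S x)); left. Qed.

Lemma bump_sup_le_ub S x u :
  0 <= u -> (forall i, S i -> bump i x <= u) -> bump_sup S x <= u.
Proof.
move=> u0 hu; apply: ge_sup; first by exists 0; left.
by move=> y [->|[i Si ->]] //; apply: hu.
Qed.

Lemma bump_sup_le S x : bump_sup S x <= beta.
Proof. by apply: bump_sup_le_ub => [|i _]; [apply: ltW | apply: bump_le]. Qed.

Lemma bump_sup_lipschitz S u v : bump_sup S u <= bump_sup S v + p (u - v).
Proof.
apply: bump_sup_le_ub => [|i Si].
  by rewrite addr_ge0 ?bump_sup_ge0 ?(value_ge0 hv).
by apply: le_trans (bump_lipschitz i u v) _; rewrite lerD2r bump_sup_ge.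
Qed.

Lemma bump_supN S x : bump_sup S (- x) = bump_sup S x.
Proof.
rewrite /bump_sup; congr sup; apply/seteqP; split=> y /=.
  by case=> [->|[i Si ->]]; [left | right; exists i; rewrite ?bumpN].
by case=> [->|[i Si ->]]; [left | right; exists i; rewrite ?bumpN].
Qed.

Lemma bump_sup_self S i : S i -> bump_sup S (xs i) = beta.
Proof.
by move=> Si; apply/le_anti; rewrite bump_sup_le -{1}(bump_self i) bump_sup_ge.
Qed.

Lemma bump_sup_other S i : ~ S i -> bump_sup S (xs i) = 0.
Proof.
move=> nSi; apply/le_anti; rewrite bump_sup_ge0 andbT.
by apply: bump_sup_le_ub => // j Sj; rewrite bump_other // => ij; rewrite ij in nSi.
Qed.

End Bumps.

Section Extension.
Variables (R : realType) (G : zmodType) (H : finZmodType) (p : G -> R)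
  (K : G -> Prop).
Hypotheses (hv : is_value full p) (hK : is_subgroup K).
Variables (c : R) (g : G -> R).
Hypotheses (c_gt0 : 0 < c) (pK_le : forall x, K x -> p x <= c + c)
  (g_ge0 : forall x, 0 <= g x) (g_le : forall x, g x <= c)
  (g_lipschitz : forall u v, g u <= g v + p (u - v))
  (gN : forall x, g (- x) = g x).

Definition ext_value (z : G * H) : R := if z.2 == 0 then p z.1 else c + g z.1.

Let KH (z : G * H) := K z.1.

Lemma ext_value_is_value : is_value KH ext_value.
Proof.
split=> [[x a] _|[x a] _|[x a] _|[x a] [y b] Kx Ky]; rewrite /ext_value /=.
- by case: eqP => _; [apply: value_ge0 | rewrite addr_ge0 ?g_ge0 // ltW].
- case: eqP => [->|a0].
    by split=> [px|[->]]; [rewrite (value_eq0 hv px) | apply: value0].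
  split=> [h|[_ /a0 []]]; have : 0 < c + g x by rewrite (lt_le_trans c_gt0) ?lerDl.
  by rewrite h ltxx.
- by rewrite oppr_eq0 valueN // gN.
case: (eqVneq a 0) => [->|a0]; case: (eqVneq b 0) => [->|b0];
  rewrite ?add0r ?addr0 ?eqxx ?(negbTE a0) ?(negbTE b0).
- exact: valueD.
- by have := g_lipschitz (x + y) y; rewrite addrK; lra.
- by have := g_lipschitz (x + y) x; rewrite addrC addrK; lra.
have := g_ge0 x; have := g_ge0 y; have := g_le (x + y).
by have := pK_le (subgroupD hK Kx Ky); case: eqP => _; lra.
Qed.

Lemma ext_value_separable : separable K p -> separable KH ext_value.
Proof.
move=> [s [Ks hs]].
exists (fun m => if unpickle m is Some (n, a) then (s n, a) else 0).
split=> [m|[x a] Kx eps eps0].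
  by case: unpickle => [[n a]|]; [apply: Ks | case: hK].
have [n hn] := hs x Kx eps eps0.
by exists (pickle (n, a)); rewrite pickleK /ext_value /= subrr eqxx.
Qed.

Lemma ext_value_O0 : class_O0 full p -> class_O0 KH ext_value.
Proof.
move=> hO0; apply: (@class_O0_le _ _ _ _ (fun z => p z.1) (c + c)).
  move=> [x a] _ eps eps0; have [n0 hn0] := hO0 x Logic.I eps eps0.
  by exists n0 => n; rewrite pair_mulrn; apply: hn0.
move=> [x a] n _; rewrite pair_mulrn /ext_value /=.
have := value_ge0 hv (x *+ n); have := g_ge0 (x *+ n); have := g_le (x *+ n).
by case: eqP => _ *; apply/andP; split; lra.
Qed.

Lemma ext_value_bounded (r : radius) :
  bounded_by r full p -> (r = r_one -> c + c <= 1) -> bounded_by r KH ext_value.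
Proof.
case: r => //= p_le1 /(_ erefl) c_le [x a] _; rewrite /ext_value.
by have := p_le1 x Logic.I; have := g_le x; case: eqP => _; lra.
Qed.

Lemma in_frakG_ext_value (r : radius) (N : nat) :
  in_frakG r N full p -> has_exponent N (@full H) ->
  (r = r_one -> c + c <= 1) -> in_frakG r N KH ext_value.
Proof.
move=> [_ _ sep O0 [bd expG]] expH c_le; split.
- by case: hK => K0 KB; split=> [|[x a] [y b]] //; apply: KB.
- exact: ext_value_is_value.
- by case: hK => K0 _; apply/ext_value_separable/(separable_subset hv K0 sep).
- exact: ext_value_O0.
- by split; [apply: ext_value_bounded | apply: has_exponent_prod].
Qed.

Lemma ext_value_translate (r : radius) (N : nat) (h : H) :
  h != 0 -> in_frakG r N full p -> has_exponent N (@full H) ->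
  (r = r_one -> c + c <= 1) ->
  (forall q : G * H -> R, in_frakG r N KH q ->
     (forall x, K x -> q (x, 0) = p x) ->
     exists psi : G * H -> G,
       [/\ (forall z w, KH z -> KH w -> psi (z + w) = psi z + psi w),
           (forall z, KH z -> p (psi z) = q z) &
           (forall x, K x -> psi (x, 0) = x)]) ->
  exists y, forall x, K x -> p (x + y) = c + g x.
Proof.
move=> h0 frakG expH c_le ext.
have [|psi [psi_add psi_iso psi_id]] := ext _ (in_frakG_ext_value frakG expH c_le).
  by move=> x _; rewrite /ext_value eqxx.
have K0 : K 0 by case: hK.
exists (psi (0, h)) => x Kx.
rewrite -{1}(psi_id x Kx) -psi_add //.
have -> : (x, 0) + (0, h) = (x + 0, 0 + h) :> G * H by [].
rewrite addr0 add0r psi_iso //.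
by rewrite /ext_value /= (negbTE h0).
Qed.

End Extension.

Lemma pred_nat_not_injective (f : (nat -> Prop) -> nat) : ~ injective f.
Proof.
move=> f_inj; pose D k := exists2 S, f S = k & ~ S k.
have [DfD|nDfD] := pselect (D (f D)); last by apply: (nDfD); exists D.
by case: (DfD) => S /f_inj ->.
Qed.

Lemma separable_no_separated_pred_family (R : realType) (G : zmodType)
    (p : G -> R) (Y : (nat -> Prop) -> G) (beta : R) :
  is_value full p -> separable full p -> 0 < beta ->
  ~ (forall S S' i, S i -> ~ S' i -> beta <= p (Y S - Y S')).
Proof.
move=> hv [s [_ hs]] beta0 Ysep.
have /choice[idx hidx] : forall S, exists n, p (Y S - s n) < beta / 2.
  by move=> S; apply: hs; rewrite ?divr_gt0.
apply: (@pred_nat_not_injective idx) => S S' eqSS'.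
have sub T T' : idx T = idx T' -> forall i, T i -> T' i.
  move=> eqTT' i Ti; apply: contrapT => nT'i.
  have := Ysep _ _ _ Ti nT'i; have := value_sub_trans hv (Y T) (s (idx T)) (Y T').
  rewrite (value_subC hv (s _)) eqTT'.
  by have := hidx T; have := hidx T'; rewrite eqTT'; lra.
by apply: funext => i; apply: propext; split; apply: sub.
Qed.

Lemma exists_half_bound (R : realType) (r : radius) (G : zmodType) (p : G -> R)
    (K : G -> Prop) :
  bounded_by r full p -> metric_bounded p K -> K 0 ->
  exists2 c : R, 0 < c &
    (forall x, K x -> p x <= c + c) /\ (r = r_one -> c + c <= 1).
Proof.
case: r => [p_le1 _ _|_ [M hM] K0].
  by exists (1 / 2); [lra | split=> [x _|_]; [have := p_le1 x Logic.I |]; lra].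
exists ((`|M| + 1) / 2); first by have := normr_ge0 M; lra.
split=> // x Kx; have := hM x 0 Kx K0; rewrite subr0.
by have := ler_norm M; lra.
Qed.

Theorem proposition4p10 (R : realType) (r : radius) (N : nat)
    (G : zmodType) (p : G -> R) (K : G -> Prop) :
  N <> 1%N ->
  is_universal_G r N p ->
  is_subgroup K -> closed_set p K -> metric_bounded p K ->
  (forall (H : finZmodType) (q : G * H -> R),
     in_frakG r N (fun z : G * H => K z.1) q ->
     (forall x, K x -> q (x, 0) = p x) ->
     exists psi : G * H -> G,
       [/\ (forall z w, K z.1 -> K w.1 -> psi (z + w) = psi z + psi w),
           (forall z, K z.1 -> p (psi z) = q z) &
           (forall x, K x -> psi (x, 0) = x)]) ->
  compact_set p K.
Proof.
move=> N1 [[frakG hcomp] _ _] hK hcl Kbd ext.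
have [_ hv sep _ [bd _]] := frakG; have K0 : K 0 by case: hK.
apply: totally_bounded_compact => //; apply: contrapT.
move=> /not_totally_bounded_far[eps eps0 /(far_separated_seq hv)[xs [Kxs xs_sep]]].
have [c c0 [pK_le c_le]] := exists_half_bound bd Kbd K0.
pose beta := Num.min eps c.
have beta0 : 0 < beta by rewrite lt_min eps0 c0.
have beta_sep i j : i <> j -> beta <= p (xs i - xs j) /\ beta <= p (xs i + xs j).
  by move=> /xs_sep[h1 h2]; rewrite !ge_min h1 h2.
have /choice[Y hY] S : exists y,
    forall x, K x -> p (x + y) = c + bump_sup p xs beta S x.
  apply: (ext_value_translate hv hK c0 pK_le) (oner_neq0 _) frakG
    (Zp_has_exponent N1) c_le (ext _) => [x|x|u v|x].
  - exact: bump_sup_ge0.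
  - by rewrite (le_trans (bump_sup_le hv xs beta0 S x)) ?ge_min ?lexx ?orbT.
  - exact: bump_sup_lipschitz.
  - exact: bump_supN.
apply: (separable_no_separated_pred_family hv sep beta0 (Y := Y)) => S S' i Si nS'i.
have := hY S _ (Kxs i); have := hY S' _ (Kxs i).
rewrite (bump_sup_self hv xs beta0 Si) (bump_sup_other hv beta0 beta_sep nS'i).
have := valueD hv (xs i + Y S') (Y S - Y S'); rewrite addrA addrAC addrK; lra.
Qed.
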